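(* Let $O=\langle B,E,F,\mathsf c\rangle$ be an occurrence net and let $\mathcal C(O)=\langle S,E,F',I,\emptyset,\mathsf m,\ell\rangle$ be the associated net, where $S=\{(\ast,e)\mid e\in E\}\cup\{(e,\ast)\mid e\in E\}\cup\{\{e,e'\}\mid e\ \#\ e'\}$, $F'=\{((\ast,e),e)\mid e\in E\}\cup\{(s,e)\mid s=\{e,e'\}\in S\}\cup\{(e,(e,\ast))\mid e\in E\}$, $I=\{((\ast,e'),e)\mid e'<_O e\}$, $\mathsf m(s)=0$ if $s=(e,\ast)$ and $\mathsf m(s)=1$ otherwise, and $\ell$ is the identity. Then $\mathcal C(O)$ is an occurrence causal net.
   Context: Occurrence nets: a net $\langle S,T,F,\mathsf m\rangle$ has disjoint places/transitions, flow $F$, initial marking $\mathsf m$; ${}^\bullet x,x^\bullet$ pre/postsets; $t$ enabled at $m$ if ${}^\bullet t\subseteq m$, firing gives $m-{}^\bullet t+t^\bullet$. $<_N$ is the transitive closure of $F$, $\le_N$ its reflexive closure; acyclic means $\le_N$ is a partial order; safe means at most one token per place in reachable markings. An occurrence net $O=\langle B,E,F,\mathsf c\rangle$ is an acyclic safe net with: ${}^\bullet b$ empty or a singleton, ${}^\bullet b=\emptyset$ for $b\in\mathsf c$; each $b$ has some $b'\in\mathsf c$ with $b'\le_O b$; $\{e'\mid e'\le_O e\}$ finite; and $\#$ (with $e\ \#_0\ e'$ iff $e\neq e'$ and ${}^\bullet e\cap{}^\bullet e'\neq\emptyset$; $x\ \#\ x'$ iff $y\ \#_0\ y'$ for some $y\le_O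 x$, $y'\le_O x'$) irreflexive. Contextual/causal nets: a labelled contextual net $N=\langle S,T,F,I,R,\mathsf m,\ell\rangle$ has inhibitor arcs $I\subseteq S\times T$, read arcs $R\subseteq S\times T$, labelling $\ell:T\to L$; ${}^\circ t=\{s\mid(s,t)\in I\}$, $\underline t=\{s\mid(s,t)\in R\}$; every transition has nonempty preset; $t$ enabled at $m$ if ${}^\bullet t+\underline t\subseteq m$ and $m(s)=0$ for $s\in{}^\circ t$; firing gives $m-{}^\bullet t+t^\bullet$. States are multisets of transitions of finite firing sequences from $\mathsf m$, $\lfloor X\rfloor$ the support. Nets are assumed safe. $t\prec_N t'$ iff ${}^\bullet t\cap{}^\circ t'\neq\emptyset$ or $t^\bullet\cap\underline{t'}\neq\emptyset$; $t\ \#_N\ t'$ iff no state contains both in its support. Pre-causal: (1) $<_N\cap(T\times T)=\emptyset$, ${}^\bullet t\cap{}^\circ t=\emptyset$, $t^\bullet\cap\underline t=\emptyset$; (2) $|\ell(s^\bullet)|=1$ for $s\in{}^\circ t$; (3) $t\prec_N t'\Rightarrow$ not $t'\prec_N t$; (4) ${}^\circ t\cup\underline t$ finite; (5) $t\ \#_N\ t'\Rightarrow {}^\bullet t\cap{}^\bullet t'\neq\emptyset$; (6) $t\neq t'$, $\ell(t)=\ell(t')\Rightarrow t\ \#_N\ t'$. Causal net: pre-causal and (a) $\prec^*$ restricted to the support of each state is a partial order, (b) every transition is in the support of some state. An occurrence causal net is a causal net $K$ with $R=\emptyset$, $\ell$ injective, $\prec_K^{*}$ a partial order on all of $T$, and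 such that $t\ \#_K\ t'$ and $t'\prec_K^{*}t''$ imply $t\ \#_K\ t''$. *)

From Stdlib Require Import List Relations ClassicalDescription.
Import ListNotations.

Definition ind (P : Prop) : nat := if excluded_middle_informative P then 1 else 0.

Definition mcount {T : Type} (s : list T) (t : T) : nat :=
  fold_right (fun u n => ind (u = t) + n) 0 s.

Definition po_on {A : Type} (D : A -> Prop) (r : A -> A -> Prop) : Prop :=
  (forall x, D x -> r x x) /\
  (forall x y z, D x -> D y -> D z -> r x y -> r y z -> r x z) /\
  (forall x y, D x -> D y -> r x y -> r y x -> x = y).

Definition enabled {S T : Type} (pre inh read : S -> T -> Prop)
  (m : S -> nat) (t : T) : Prop :=
  (forall s, ind (pre s t) + ind (read s t) <= m s) /\
  (forall s, inh s t -> m s = 0).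

Definition fire {S T : Type} (pre : S -> T -> Prop) (post : T -> S -> Prop)
  (m : S -> nat) (t : T) : S -> nat :=
  fun s => m s - ind (pre s t) + ind (post t s).

Fixpoint fires {S T : Type} (pre : S -> T -> Prop) (post : T -> S -> Prop)
  (inh read : S -> T -> Prop) (m : S -> nat) (sigma : list T) (m' : S -> nat)
  : Prop :=
  match sigma with
  | [] => m' = m
  | t :: sigma' => enabled pre inh read m t /\
                   fires pre post inh read (fire pre post m t) sigma' m'
  end.

Record cnet := {
  cS : Type; cT : Type;
  cpre : cS -> cT -> Prop;    (* F restricted to S x T *)
  cpost : cT -> cS -> Prop;   (* F restricted to T x S *)
  cinh : cS -> cT -> Prop;
  cread : cS -> cT -> Prop;
  cm : cS -> nat;
  cL : Type;
  clab : cT -> cL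
}.

Definition cfires (N : cnet) := fires (cpre N) (cpost N) (cinh N) (cread N).

Definition cn_safe (N : cnet) : Prop :=
  forall sigma m, cfires N (cm N) sigma m -> forall s, m s <= 1.

Definition cn_wf (N : cnet) : Prop :=
  cn_safe N /\ forall t, exists s, cpre N s t.

Definition is_state (N : cnet) (X : cT N -> nat) : Prop :=
  exists sigma m, cfires N (cm N) sigma m /\ forall t, X t = mcount sigma t.

Definition supp {T : Type} (X : T -> nat) (t : T) : Prop := 0 < X t.

Definition cflow (N : cnet) (x y : cS N + cT N) : Prop :=
  match x, y with
  | inl s, inr t => cpre N s t
  | inr t, inl s => cpost N t s
  | _, _ => False
  end.

Definition clt (N : cnet) := clos_trans _ (cflow N).

Definition cprec (N : cnet) (t t' : cT N) : Prop :=
  (exists s, cpre N s t /\ cinh N s t') \/ (exists s, cpost N t s /\ cread N s t').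

Definition cprec_star (N : cnet) := clos_refl_trans _ (cprec N).

Definition cconf (N : cnet) (t t' : cT N) : Prop :=
  ~ exists X, is_state N X /\ supp X t /\ supp X t'.

Definition precausal (N : cnet) : Prop :=
  cn_wf N /\
  (forall t t', ~ clt N (inr t) (inr t')) /\
  (forall t, ~ exists s, cpre N s t /\ cinh N s t) /\
  (forall t, ~ exists s, cpost N t s /\ cread N s t) /\
  (* (2) |l(s^bullet)| = 1 for inhibitor places s of t *)
  (forall s t, cinh N s t ->
     exists l, (exists t', cpre N s t') /\ (forall t', cpre N s t' -> clab N t' = l)) /\
  (forall t t', cprec N t t' -> ~ cprec N t' t) /\
  (forall t, exists ls : list (cS N), forall s, cinh N s t \/ cread N s t -> In s ls) /\
  (forall t t', cconf N t t' -> exists s, cpre N s t /\ cpre N s t') /\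
  (forall t t', t <> t' -> clab N t = clab N t' -> cconf N t t').

Definition causal_net (N : cnet) : Prop :=
  precausal N /\
  (forall X, is_state N X -> po_on (supp X) (cprec_star N)) /\
  (forall t, exists X, is_state N X /\ supp X t).

Definition occurrence_causal_net (N : cnet) : Prop :=
  causal_net N /\
  (forall s t, ~ cread N s t) /\
  (forall t t', clab N t = clab N t' -> t = t') /\
  po_on (fun _ => True) (cprec_star N) /\
  (forall t t' t'', cconf N t t' -> cprec_star N t' t'' -> cconf N t t'').

Record pnet := {
  pS : Type; pT : Type;
  ppre : pS -> pT -> Prop;
  ppost : pT -> pS -> Prop;
  pm : pS -> nat
}.

Definition noarc {S T : Type} : S -> T -> Prop := fun _ _ => False.

Definition pflow (N : pnet) (x y : pS N + pT N) : Prop :=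
  match x, y with
  | inl s, inr t => ppre N s t
  | inr t, inl s => ppost N t s
  | _, _ => False
  end.

Definition plt (N : pnet) := clos_trans _ (pflow N).
Definition ple (N : pnet) := clos_refl_trans _ (pflow N).

Definition pn_safe (N : pnet) : Prop :=
  forall sigma m, fires (ppre N) (ppost N) noarc noarc (pm N) sigma m ->
  forall s, m s <= 1.

Definition conf0 (N : pnet) (e e' : pT N) : Prop :=
  e <> e' /\ exists b, ppre N b e /\ ppre N b e'.

Definition pconf (N : pnet) (x x' : pS N + pT N) : Prop :=
  exists y y', ple N (inr y) x /\ ple N (inr y') x' /\ conf0 N y y'.

Definition occurrence_net (N : pnet) : Prop :=
  po_on (fun _ => True) (ple N) /\
  pn_safe N /\
  (forall b e e', ppost N e b -> ppost N e' b -> e = e') /\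
  (forall b, 0 < pm N b -> forall e, ~ ppost N e b) /\
  (forall b, exists b', 0 < pm N b' /\ ple N (inl b') (inl b)) /\
  (forall e, exists l : list (pT N), forall e', ple N (inr e') (inr e) -> In e' l) /\
  (forall x, ~ pconf N x x).

Inductive cplace (E : Type) : Type :=
| PIn (e : E)            (* ( *, e ) *)
| POut (e : E)           (* ( e, * ) *)
| PConf (X : E -> Prop). (* { e, e' } as a subset of E *)
Arguments PIn {E}. Arguments POut {E}. Arguments PConf {E}.

Definition cplace_ok (O : pnet) (p : cplace (pT O)) : Prop :=
  match p with
  | PConf X => exists e e', pconf O (inr e) (inr e') /\ X = (fun x => x = e \/ x = e')
  | _ => True
  end.

Definition CPlace (O : pnet) : Type := { p : cplace (pT O) | cplace_ok O p }.

Definition C_pre (O : pnet) (s : CPlace O) (e : pT O) : Prop :=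
  match proj1_sig s with
  | PIn e0 => e0 = e
  | PConf X => X e
  | POut _ => False
  end.

Definition C_post (O : pnet) (e : pT O) (s : CPlace O) : Prop :=
  match proj1_sig s with
  | POut e0 => e0 = e
  | _ => False
  end.

Definition C_inh (O : pnet) (s : CPlace O) (e : pT O) : Prop :=
  match proj1_sig s with
  | PIn e' => plt O (inr e') (inr e)
  | _ => False
  end.

Definition C_m (O : pnet) (s : CPlace O) : nat :=
  match proj1_sig s with
  | POut _ => 0
  | _ => 1
  end.

Definition C_of (O : pnet) : cnet :=
  {| cS := CPlace O; cT := pT O;
     cpre := C_pre O; cpost := C_post O; cinh := C_inh O;
     cread := fun _ _ => False;
     cm := C_m O; cL := pT O; clab := fun e => e |}.

(** The heart of the proof is an explicit description of the behaviour of C(O).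
    Firing an event e of C(O) consumes the token on ( *, e) and the tokens on
    all conflict places {e, e'}, and produces the token on (e, * ).  Hence after
    firing a sequence p the marking only depends on the set of events in p
    ([marking_after p]), and e is enabled there exactly when e is not yet in p,
    all causes of e (its inhibitors) are in p, and no event of p is in conflict
    with e ([can_extend p e]).  So firing sequences are exactly the sequences
    built event by event under this condition ([valid_from]).

    For an occurrence net, valid sequences enumerate exactly the finite
    causally closed, conflict-free sets of events ([configuration]): every valid
    sequence lists a configuration, and every configuration can be listed by
    adding maximal events last.  Consequently two events are in conflict in
    C(O) iff they are in conflict in O, and the relation [cprec] of C(O) is the
    strict causality of O.  All clauses of "occurrence causal net" then follow
    from the corresponding properties of O (acyclicity, finiteness of causes,
    irreflexivity and heredity of conflict). *)

From Stdlib Require Import List Relations ClassicalDescription Classical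
  FunctionalExtensionality Lia Wf_nat.
Import ListNotations.

Ltac decide_ind := unfold ind in *; repeat destruct excluded_middle_informative.

Lemma mcount_pos {T : Type} (l : list T) (t : T) : 0 < mcount l t <-> In t l.
Proof.
  induction l as [|u l IH]; simpl; [split; [lia | tauto]|].
  rewrite <- IH. decide_ind; split; intuition (subst; auto; lia).
Qed.

Lemma clos_rt_cases {A : Type} (R : relation A) (x y : A) :
  clos_refl_trans A R x y -> x = y \/ clos_trans A R x y.
Proof.
  induction 1 as [x y H|x|x y z _ [->|H1] _ [->|H2]]; auto using t_step.
  right; eapply t_trans; eauto.
Qed.

Lemma list_of_finite {T : Type} (D : T -> Prop) (l : list T) :
  (forall y, D y -> In y l) -> exists R, forall y, In y R <-> D y.
Proof.
  intro Hl. exists (filter (fun y => if excluded_middle_informative (D y) then true else false) l).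
  intro y. rewrite filter_In.
  destruct excluded_middle_informative;
    [split; [tauto | auto] | split; [intros [_ Hf]; discriminate | tauto]].
Qed.

Lemma clos_trans_first_step {A : Type} (R : relation A) (x y : A) :
  clos_trans A R x y -> exists z, R x z /\ clos_refl_trans A R z y.
Proof.
  intro H. apply clos_trans_t1n in H. destruct H as [y Hxy | y z Hxy Hyz].
  - exists y. split; [exact Hxy | apply rt_refl].
  - exists y. split; [exact Hxy |]. apply clos_t_clos_rt, clos_t1n_trans, Hyz.
Qed.

Section CausalNetOfOccurrenceNet.

Variable O : pnet.

Local Notation E := (pT O).
Local Notation lt_O x y := (plt O (inr x) (inr y)).
Local Notation le_O x y := (ple O (inr x) (inr y)).
Local Notation conf_O x y := (pconf O (inr x) (inr y)).

Lemma pconf_sym (x y : pS O + E) : pconf O x y -> pconf O y x.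
Proof.
  intros (a & b & Ha & Hb & Hne & c & Hc1 & Hc2).
  exists b, a. repeat split; auto. exists c; auto.
Qed.

Lemma pconf_hered (x y x' y' : E) :
  conf_O x y -> le_O x x' -> le_O y y' -> conf_O x' y'.
Proof.
  intros (a & b & Ha & Hb & H0) Hx Hy.
  exists a, b. unfold ple in *. eauto using rt_trans.
Qed.

Definition place_in (e : E) : CPlace O := exist _ (PIn e) I.

Definition place_conf (x y : E) (H : conf_O x y) : CPlace O :=
  exist _ (PConf (fun z => z = x \/ z = y)) (ex_intro _ x (ex_intro _ y (conj H eq_refl))).

(* The relation [cprec] of C(O) is the strict causality of O: inhibitor arcs
   ( *, e) -o e' exist exactly for e <_O e', and there are no read arcs. *)
Lemma cprec_iff (t t' : E) : cprec (C_of O) t t' <-> lt_O t t'.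
Proof.
  split.
  - intros [(s & Hpre & Hinh) | (s & _ & [])].
    destruct s as [[e|e|X] Hs]; cbn in *; try tauto. subst; exact Hinh.
  - intro H. left. exists (place_in t). simpl. split; [reflexivity | exact H].
Qed.

Lemma cprec_star_ple (t t' : E) : cprec_star (C_of O) t t' -> le_O t t'.
Proof.
  induction 1 as [x y Hxy | x | x y z _ IH1 _ IH2].
  - apply clos_t_clos_rt, cprec_iff, Hxy.
  - apply rt_refl.
  - exact (rt_trans _ _ _ _ _ IH1 IH2).
Qed.

(* Places of C(O) with no outgoing arc (the places (e, * )). *)
Definition sink (x : cS (C_of O) + cT (C_of O)) : Prop :=
  exists s, x = inl s /\ forall t, ~ C_pre O s t.

(* Every flow path leaving a transition or a sink ends in a sink; in
   particular no flow path connects two transitions of C(O). *)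
Lemma clt_sink (x y : cS (C_of O) + cT (C_of O)) :
  clt (C_of O) x y -> (sink x \/ exists t, x = inr t) -> sink y.
Proof.
  induction 1 as [x y Hxy|x y z _ IH1 _ IH2]; intros Hx.
  - destruct Hx as [(s & -> & Hs) | (t & ->)]; destruct y as [s'|t']; simpl in Hxy.
    + destruct Hxy.
    + exact (False_ind _ (Hs _ Hxy)).
    + exists s'. split; [reflexivity|]. intros t0.
      destruct s' as [[e|e|X] Hok]; simpl in *; tauto.
    + destruct Hxy.
  - auto.
Qed.


Definition marking_after (p : list E) (s : CPlace O) : nat :=
  match proj1_sig s with
  | PIn e => 1 - ind (In e p)
  | POut e => ind (In e p)
  | PConf X => 1 - ind (exists z, In z p /\ X z)
  end.

Lemma marking_after_le1 (p : list E) (s : CPlace O) : marking_after p s <= 1.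
Proof. destruct s as [[e|e|X] Hs]; unfold marking_after; simpl; decide_ind; lia. Qed.

Lemma marking_after_nil : marking_after [] = C_m O.
Proof.
  apply functional_extensionality; intros [[e|e|X] Hs];
    unfold marking_after, C_m; simpl; decide_ind; firstorder.
Qed.

Definition can_extend (p : list E) (e : E) : Prop :=
  ~ In e p /\ (forall y, lt_O y e -> In y p) /\ (forall x, In x p -> ~ conf_O x e).

Lemma can_extend_conf_place (p : list E) (e : E) (X : E -> Prop) :
  can_extend p e -> cplace_ok O (PConf X) -> X e -> ~ exists z, In z p /\ X z.
Proof.
  intros (He & _ & Hcf) (x1 & x2 & H12 & ->) HXe (z & Hz & HXz).
  destruct HXe as [-> | ->], HXz as [-> | ->]; try tauto;
    solve [exact (Hcf _ Hz H12) | exact (Hcf _ Hz (pconf_sym _ _ H12))].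
Qed.

Lemma enabled_iff (p : list E) (e : E) :
  enabled (C_pre O) (C_inh O) (fun _ _ => False) (marking_after p) e <-> can_extend p e.
Proof.
  split.
  - intros [Hpre Hinh]. split; [|split].
    + intro Hin. specialize (Hpre (place_in e)).
      cbn in Hpre. decide_ind; tauto || lia.
    + intros y Hy. specialize (Hinh (place_in y) Hy).
      cbn in Hinh. decide_ind; tauto || lia.
    + intros x Hx Hxe. specialize (Hpre (place_conf x e Hxe)).
      cbn in Hpre. decide_ind; firstorder lia.
  - intros Hok. pose proof Hok as (Hnew & Hcause & _). split.
    + intros [[e0|e0|X] Hs]; cbn; decide_ind; try lia; subst; try tauto.
      exfalso; eapply can_extend_conf_place; eauto.
    + intros [[y|y|X] Hs] Hy; cbn in *; try tauto.
      decide_ind; auto; exfalso; auto.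
Qed.


Lemma fire_step (p : list E) (e : E) :
  can_extend p e -> fire (C_pre O) (C_post O) (marking_after p) e = marking_after (p ++ [e]).
Proof.
  intros Hok. pose proof Hok as (Hnew & _ & _).
  apply functional_extensionality; intros [[e0|e0|X] Hs]; unfold fire, marking_after; cbn.
  - decide_ind; rewrite ?in_app_iff in *; simpl in *; subst; intuition (try lia; try congruence).
  - decide_ind; rewrite ?in_app_iff in *; simpl in *; subst; intuition (try lia; try congruence).
  - pose proof (can_extend_conf_place p e X Hok Hs) as Hfree.
    assert (Hext : (exists z, In z (p ++ [e]) /\ X z) <-> (exists z, In z p /\ X z) \/ X e).
    { split.
      - intros (z & Hz & HXz). rewrite in_app_iff in Hz. destruct Hz as [Hz | [<- | []]]; eauto.
      - intros [(z & Hz & HXz) | HXe]; [exists z | exists e]; rewrite in_app_iff; simpl; auto. }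
    destruct (classic (X e)); decide_ind; firstorder lia.
Qed.

Fixpoint valid_from (p : list E) (sigma : list E) : Prop :=
  match sigma with
  | [] => True
  | e :: sigma' => can_extend p e /\ valid_from (p ++ [e]) sigma'
  end.

Lemma fires_iff (sigma p : list E) (m : CPlace O -> nat) :
  fires (C_pre O) (C_post O) (C_inh O) (fun _ _ => False) (marking_after p) sigma m <->
  valid_from p sigma /\ m = marking_after (p ++ sigma).
Proof.
  revert p. induction sigma as [|e sigma IH]; intro p; simpl.
  - rewrite app_nil_r. tauto.
  - rewrite enabled_iff. split.
    + intros [Hok Hf]. rewrite fire_step, IH, <- app_assoc in Hf by exact Hok. tauto.
    + intros [[Hok Hlin] ->]. rewrite fire_step, IH, <- app_assoc by exact Hok. tauto.
Qed.

Lemma reachable_iff (sigma : list E) (m : CPlace O -> nat) :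
  cfires (C_of O) (cm (C_of O)) sigma m <-> valid_from [] sigma /\ m = marking_after sigma.
Proof. unfold cfires; simpl. rewrite <- marking_after_nil. apply fires_iff. Qed.

Lemma valid_from_snoc (p sigma : list E) (e : E) :
  valid_from p (sigma ++ [e]) <-> valid_from p sigma /\ can_extend (p ++ sigma) e.
Proof.
  revert p. induction sigma as [|x sigma IH]; intro p; simpl.
  - rewrite app_nil_r. tauto.
  - rewrite IH, <- app_assoc. simpl. tauto.
Qed.


Definition configuration (l : list E) : Prop :=
  (forall e y, In e l -> lt_O y e -> In y l) /\
  (forall x y, In x l -> In y l -> ~ conf_O x y).

Lemma configuration_down (l : list E) (e y : E) :
  configuration l -> In e l -> le_O y e -> In y l.
Proof.
  intros [Hclosed _] He Hy. apply clos_rt_cases in Hy as [Hy | Hy].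
  - injection Hy as ->. exact He.
  - exact (Hclosed e y He Hy).
Qed.

Hypothesis HO : occurrence_net O.

(* Causality of O is irreflexive, since [ple O] is antisymmetric. *)
Lemma plt_irrefl (e : E) : ~ lt_O e e.
Proof.
  destruct HO as ((_ & _ & Hanti) & _). intro H.
  destruct (clos_trans_first_step _ _ _ H) as (z & Hflow & Hback).
  assert (Hz : inr e = z) by (apply (Hanti _ _ I I); [apply rt_step, Hflow | exact Hback]).
  subst z. exact Hflow.
Qed.

Lemma pconf_irrefl (e : E) : ~ conf_O e e.
Proof. apply HO. Qed.

Lemma valid_configuration (sigma : list E) : valid_from [] sigma -> configuration sigma.
Proof.
  induction sigma as [|sigma e IH] using rev_ind; intros Hlin.
  - split; intros ? ? [].
  - apply valid_from_snoc in Hlin as [Hlin (_ & Hcause & Hcf)]. simpl in Hcause, Hcf.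
    destruct (IH Hlin) as [Hclosed Hfree]. split.
    + intros x y Hx Hy. rewrite in_app_iff in *. simpl in Hx.
      destruct Hx as [Hx | [<- | []]]; eauto.
    + intros x y Hx Hy. rewrite in_app_iff in Hx, Hy. simpl in Hx, Hy.
      destruct Hx as [Hx | [<- | []]], Hy as [Hy | [<- | []]].
      * auto.
      * auto.
      * intro Hc. exact (Hcf y Hy (pconf_sym _ _ Hc)).
      * apply pconf_irrefl.
Qed.

Lemma maximal_exists (R : list E) :
  R <> [] -> exists m, In m R /\ forall y, In y R -> ~ lt_O m y.
Proof.
  induction R as [|x R IH]; intro Hne; [congruence|].
  destruct R as [|z R].
  - exists x. split; [left; reflexivity|]. intros y [<- | []]. apply plt_irrefl.
  - destruct IH as (m & Hm & Hmax); [discriminate|].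
    destruct (classic (lt_O m x)) as [Hmx | Hmx].
    + exists x. split; [left; reflexivity|]. intros y [<- | Hy]; [apply plt_irrefl|].
      intro Hxy. exact (Hmax y Hy (t_trans _ _ _ _ _ Hmx Hxy)).
    + exists m. split; [right; exact Hm|]. intros y [<- | Hy]; auto.
Qed.


(* Conversely every configuration is listed by a valid sequence: list the
   configuration without one of its maximal events, then fire that event. *)
Lemma configuration_linearization (R : list E) :
  configuration R -> exists sigma, valid_from [] sigma /\ forall y, In y sigma <-> In y R.
Proof.
  remember (length R) as n eqn:Hn. revert R Hn.
  induction n as [n IH] using lt_wf_ind. intros R -> [Hclosed Hfree].
  destruct R as [|r R0]; [exists []; simpl; tauto|].
  destruct (maximal_exists (r :: R0)) as (m & Hm & Hmax); [discriminate|].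
  set (R := r :: R0) in *.
  set (R' := remove (fun x y => excluded_middle_informative (x = y)) m R).
  assert (HR' : forall y, In y R' <-> In y R /\ y <> m).
  { intro y. split; [apply in_remove | intros [Hy Hym]; apply in_in_remove; assumption]. }
  assert (Hconf' : configuration R').
  { split.
    - intros e y He Hy. apply HR' in He as [He Hem]. apply HR'. split; [eauto|].
      intros ->. exact (Hmax e He Hy).
    - intros x y Hx Hy. apply HR' in Hx, Hy. apply Hfree; tauto. }
  destruct (IH (length R') (remove_length_lt _ R m Hm) R' eq_refl Hconf')
    as (sigma & Hlin & Hsigma).
  exists (sigma ++ [m]). split.
  - apply valid_from_snoc. split; [exact Hlin|]. simpl. split; [|split].
    + rewrite Hsigma, HR'. tauto.
    + intros y Hy. apply Hsigma, HR'. split; [eauto|].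
      intros ->. exact (plt_irrefl m Hy).
    + intros x Hx. apply Hsigma, HR' in Hx. apply Hfree; tauto.
  - intro y. rewrite in_app_iff, Hsigma, HR'. simpl.
    destruct (classic (y = m)) as [-> | Hym]; intuition congruence.
Qed.

Lemma state_configuration (X : E -> nat) :
  is_state (C_of O) X -> exists sigma, configuration sigma /\ forall t, supp X t <-> In t sigma.
Proof.
  intros (sigma & m & Hfires & HX). apply reachable_iff in Hfires as [Hlin _].
  exists sigma. split; [exact (valid_configuration sigma Hlin)|].
  intro t. unfold supp. rewrite HX. apply mcount_pos.
Qed.

Lemma configuration_state (R : list E) :
  configuration R -> exists X, is_state (C_of O) X /\ forall t, In t R -> supp X t.
Proof.
  intros Hconf. destruct (configuration_linearization R Hconf) as (sigma & Hlin & Hsigma).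
  exists (mcount sigma). split.
  - exists sigma, (marking_after sigma). split; [apply reachable_iff; auto | reflexivity].
  - intros t Ht. unfold supp. apply mcount_pos, Hsigma, Ht.
Qed.

(* Two events that are not in conflict, together with all their causes, form
   a configuration (causes are finite in an occurrence net). *)
Lemma causes_configuration (t t' : E) :
  ~ conf_O t t' -> exists R, configuration R /\ In t R /\ In t' R.
Proof.
  intros Hnc. destruct HO as (_ & _ & _ & _ & _ & Hfinite & _).
  destruct (Hfinite t) as [lt Hlt], (Hfinite t') as [lt' Hlt'].
  destruct (list_of_finite (fun y => le_O y t \/ le_O y t') (lt ++ lt')) as [R HR].
  { intros y Hy. apply in_or_app. destruct Hy; auto. }
  exists R. split; [split | split; apply HR; [left | right]; apply rt_refl].
  - intros e y He Hy. apply HR in He. apply HR.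
    destruct He as [He | He]; [left | right];
      exact (rt_trans _ _ _ _ _ (clos_t_clos_rt _ _ _ _ Hy) He).
  - intros x y Hx Hy Hxy. apply HR in Hx, Hy.
    destruct Hx as [Hx | Hx], Hy as [Hy | Hy].
    + exact (pconf_irrefl t (pconf_hered _ _ _ _ Hxy Hx Hy)).
    + exact (Hnc (pconf_hered _ _ _ _ Hxy Hx Hy)).
    + exact (Hnc (pconf_sym _ _ (pconf_hered _ _ _ _ Hxy Hx Hy))).
    + exact (pconf_irrefl t' (pconf_hered _ _ _ _ Hxy Hx Hy)).
Qed.

Lemma cconf_iff (t t' : E) : cconf (C_of O) t t' <-> conf_O t t'.
Proof.
  split.
  - intros Hcc. apply NNPP. intros Hnc.
    destruct (causes_configuration t t' Hnc) as (R & Hconf & Ht & Ht').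
    destruct (configuration_state R Hconf) as (X & HX & Hsupp).
    apply Hcc. exists X. auto.
  - intros (y & y' & Hy & Hy' & Hc0) (X & HX & Ht & Ht').
    destruct (state_configuration X HX) as (sigma & Hconf & Hsupp).
    apply Hsupp in Ht, Ht'.
    apply (proj2 Hconf y y').
    + exact (configuration_down sigma t y Hconf Ht Hy).
    + exact (configuration_down sigma t' y' Hconf Ht' Hy').
    + exists y, y'. split; [apply rt_refl | split; [apply rt_refl | exact Hc0]].
Qed.


Lemma C_wf : cn_wf (C_of O).
Proof.
  split.
  - intros sigma m Hfires s. apply reachable_iff in Hfires as [_ ->]. apply marking_after_le1.
  - intro t. exists (place_in t). reflexivity.
Qed.

Lemma C_precausal : precausal (C_of O).
Proof.
  split; [exact C_wf|]. repeat split.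
  - intros t t' Hclt. destruct (clt_sink _ _ Hclt) as (s & Hs & _); [right; eauto|]. discriminate.
  - intros t (s & Hpre & Hinh). destruct s as [[e|e|X] Hs]; cbn in *; try tauto.
    subst. exact (plt_irrefl t Hinh).
  - intros t (s & _ & []).
  - intros s t Hinh. destruct s as [[e|e|X] Hs]; cbn in *; try tauto.
    exists e. split; [exists e; reflexivity | intros t' Ht'; symmetry; exact Ht'].
  - intros t t' H H'. apply cprec_iff in H, H'. exact (plt_irrefl t (t_trans _ _ _ _ _ H H')).
  - intro t. destruct HO as (_ & _ & _ & _ & _ & Hfinite & _). destruct (Hfinite t) as [l Hl].
    exists (map place_in l). intros s [Hinh | []].
    destruct s as [[e|e|X] Hs]; cbn in *; try tauto. destruct Hs.
    apply (in_map place_in), Hl, clos_t_clos_rt, Hinh.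
  - intros t t' Hcc. apply cconf_iff in Hcc. exists (place_conf t t' Hcc). cbn. auto.
  - intros t t' Hne Heq. contradiction.
Qed.

(* [cprec_star] is a partial order on all events, by acyclicity of O. *)
Lemma cprec_star_po : po_on (fun _ => True) (cprec_star (C_of O)).
Proof.
  split; [|split].
  - intros t _. apply rt_refl.
  - intros x y z _ _ _. apply rt_trans.
  - intros t t' _ _ H H'. apply cprec_star_ple in H, H'.
    destruct HO as ((_ & _ & Hanti) & _). injection (Hanti _ _ I I H H'). auto.
Qed.

Lemma C_causal : causal_net (C_of O).
Proof.
  split; [exact C_precausal | split].
  - intros X _. destruct cprec_star_po as (Hrefl & Htrans & Hanti). split; [|split]; eauto.
  - intro t. destruct (causes_configuration t t (pconf_irrefl t)) as (R & Hconf & Ht & _).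
    destruct (configuration_state R Hconf) as (X & HX & Hsupp). eauto.
Qed.

Lemma cconf_hereditary (t t' t'' : E) :
  cconf (C_of O) t t' -> cprec_star (C_of O) t' t'' -> cconf (C_of O) t t''.
Proof.
  rewrite !cconf_iff. intros Hc H. apply cprec_star_ple in H.
  exact (pconf_hered _ _ _ _ Hc (rt_refl _ _ _) H).
Qed.

End CausalNetOfOccurrenceNet.

Theorem mainTheorem11 (O : pnet) :
  occurrence_net O -> occurrence_causal_net (C_of O).
Proof.
  intro HO. split; [exact (C_causal O HO)|]. split; [|split; [|split]].
  - intros s t [].
  - intros t t' Hlab. exact Hlab.
  - exact (cprec_star_po O HO).
  - exact (cconf_hereditary O HO).
Qed.
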